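(* Let $p, n_s, q$ be positive integers, and let $\mathbf{Y} \in \mathbb{R}^{p \times q}$, $\mathbf{Z} \in \mathbb{R}^{n_s \times q}$. Suppose the pair $(\mathbf{B}, \mathbf{D})$ with $\mathbf{B} \in \mathbb{R}^{p \times n_s}$, $\mathbf{D} \in \mathbb{R}^{p \times p}$ satisfies $$(\mathbf{I} - \mathbf{D})\mathbf{Y} = \mathbf{B}\mathbf{Z}, \qquad (\mathbf{B}~\mathbf{D})\mathbf{1} = \mathbf{1}, \qquad \mathbf{B} \geq \mathbf{0},~ \mathbf{D} \geq \mathbf{0}$$ (such a pair exists when $\mathbf{Y},\mathbf{Z}$ are noiseless steady-state data generated by a true pair $(\overline{\mathbf B},\overline{\mathbf D})$, namely that pair itself). Let $\boldsymbol{\Lambda} \in \mathbb{R}^{p\times p}$ be any non-negative diagonal matrix, and define $(\mathbf{B}', \mathbf{D}')$ by $$\mathbf{B}' = \boldsymbol{\Lambda}\mathbf{B}, \qquad \mathrm{off}(\mathbf{D}') = \boldsymbol{\Lambda}\,\mathrm{off}(\mathbf{D}), \qquad \mathrm{diag}(\mathbf{D}') = \mathbf{1} - \boldsymbol{\Lambda}\big(\mathbf{B}\mathbf{1} + \mathrm{off}(\mathbf{D})\mathbf{1}\big),$$ and assume $\boldsymbol{\Lambda}$ is such that $\mathrm{diag}(\mathbf{D}') \geq \mathbf{0}$. Then $(\mathbf{B}', \mathbf{D}')$ also satisfies $(\mathbf{I} - \mathbf{D}')\mathbf{Y} = \mathbf{B}'\mathbf{Z}$, $(\mathbf{B}'~\mathbf{D}')\mathbf{1}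 = \mathbf{1}$, $\mathbf{B}' \geq \mathbf{0}$, $\mathbf{D}' \geq \mathbf{0}$.
   Context: $\mathbf{1}$ denotes the all-ones vector of appropriate dimension; inequalities between matrices are entrywise. For a square matrix $\mathbf{D}$, $\mathrm{off}(\mathbf{D})$ denotes the square matrix obtained from $\mathbf{D}$ by setting its diagonal entries to zero, and $\mathrm{diag}(\mathbf{D})$ denotes the vector of its diagonal entries. $(\mathbf{B}~\mathbf{D})$ denotes the horizontal concatenation of $\mathbf{B}$ and $\mathbf{D}$. *)

From mathcomp Require Import all_boot all_order all_algebra.
Set Implicit Arguments. Unset Strict Implicit. Unset Printing Implicit Defensive.
Import Order.TTheory GRing.Theory Num.Theory.
Local Open Scope ring_scope.

Definition ones (R : pzRingType) (n : nat) : 'cV[R]_n := const_mx 1.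

Definition mx_nonneg (R : numDomainType) (m n : nat) (A : 'M[R]_(m, n)) : Prop :=
  forall i j, 0 <= A i j.

Definition offd (R : pzRingType) (n : nat) (D : 'M[R]_n) : 'M[R]_n :=
  \matrix_(i, j) (if i == j then 0 else D i j).

Definition diagv (R : pzRingType) (n : nat) (D : 'M[R]_n) : 'cV[R]_n :=
  \col_i D i i.

From mathcomp Require Import all_boot all_order all_algebra.
Set Implicit Arguments. Unset Strict Implicit. Unset Printing Implicit Defensive.
Import Order.TTheory GRing.Theory Num.Theory.
Local Open Scope ring_scope.

(* Both constraints of the pair are linear in [I - D]: the fit reads
   [(I - D) Y = B Z] and the row-sum condition reads [(I - D) 1 = B 1].  The
   rescaled pair is exactly the one with [I - D' = Lam (I - D)] and
   [B' = Lam B], so left-multiplying both constraints by [Lam] preserves them;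
   non-negativity of [B'] and of [off(D')] is inherited from [Lam >= 0], and
   that of [diag(D')] is assumed. *)

Section RowSums.

Variable R : pzRingType.

Lemma diag_mulmxE (p n : nat) (L : 'M[R]_p) (M : 'M[R]_(p, n)) i j :
  is_diag_mx L -> (L *m M) i j = L i i * M i j.
Proof.
move=> /is_diag_mxP L_diag; rewrite mxE (bigD1 i) //= big1 ?addr0 // => k ki.
by rewrite L_diag ?mul0r // eq_sym.
Qed.

Lemma row_mx_mul_ones (p m n : nat) (A : 'M[R]_(p, m)) (C : 'M[R]_(p, n)) :
  row_mx A C *m ones R (m + n) = A *m ones R m + C *m ones R n.
Proof. by rewrite /ones -col_mx_const mul_row_col. Qed.

Lemma offd_mul_ones (p : nat) (D : 'M[R]_p) :
  offd D *m ones R p = D *m ones R p - diagv D.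
Proof.
apply/matrixP => i j; rewrite !mxE [in RHS](bigD1 i) //= addrAC.
rewrite !mxE mulr1 subrr add0r (bigD1 i) //= !mxE eqxx mul0r add0r.
by apply: eq_bigr => k ki; rewrite !mxE eq_sym (negbTE ki).
Qed.

Lemma rowsum_offd (p n : nat) (B : 'M[R]_(p, n)) (D : 'M[R]_p) :
  row_mx B D *m ones R (n + p) = ones R p ->
  B *m ones R n + offd D *m ones R p = ones R p - diagv D.
Proof. by rewrite offd_mul_ones addrA -row_mx_mul_ones => ->. Qed.

Lemma one_subD_scale (p : nat) (L D D' : 'M[R]_p) :
  is_diag_mx L ->
  offd D' = L *m offd D ->
  diagv D' = ones R p - L *m (ones R p - diagv D) ->
  1%:M - D' = L *m (1%:M - D).
Proof.
move=> L_diag offD' diagD'; apply/matrixP => i j; rewrite diag_mulmxE // !mxE.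
have [<-|ij] := eqVneq i j.
  have := congr1 (fun v : 'cV_p => v i 0) diagD'.
  rewrite /= mxE [(_ - _ : 'cV_p) i 0]mxE [(- _ : 'cV_p) i 0]mxE.
  by rewrite diag_mulmxE // !mxE => ->; rewrite opprB addrC subrK.
have := congr1 (fun M : 'M_p => M i j) offD'.
by rewrite diag_mulmxE // !mxE (negbTE ij) => ->; rewrite !mulr0n !sub0r mulrN.
Qed.

Lemma row_stochastic_scale (p n : nat) (L : 'M[R]_p) (B : 'M[R]_(p, n))
    (D D' : 'M[R]_p) :
  row_mx B D *m ones R (n + p) = ones R p ->
  1%:M - D' = L *m (1%:M - D) ->
  row_mx (L *m B) D' *m ones R (n + p) = ones R p.
Proof.
rewrite !row_mx_mul_ones => rowBD scaleD.
have -> : D' = 1%:M - L *m (1%:M - D) by rewrite -scaleD opprB addrC subrK.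
rewrite mulmxBl mul1mx -!mulmxA mulmxBl mul1mx.
have -> : ones R p - D *m ones R p = B *m ones R n by apply/eqP; rewrite subr_eq rowBD.
by rewrite addrC subrK.
Qed.

End RowSums.

Section NonNegative.

Variable R : numDomainType.

Lemma mx_nonneg_diag_mul (p n : nat) (L : 'M[R]_p) (M : 'M[R]_(p, n)) :
  is_diag_mx L -> mx_nonneg L -> mx_nonneg M -> mx_nonneg (L *m M).
Proof. by move=> L_diag L_ge0 M_ge0 i j; rewrite diag_mulmxE // mulr_ge0. Qed.

Lemma mx_nonneg_offd (p : nat) (D : 'M[R]_p) :
  mx_nonneg D -> mx_nonneg (offd D).
Proof. by move=> D_ge0 i j; rewrite mxE; case: ifP. Qed.

Lemma mx_nonneg_offd_diagv (p : nat) (D : 'M[R]_p) :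
  mx_nonneg (offd D) -> mx_nonneg (diagv D) -> mx_nonneg D.
Proof.
move=> offD_ge0 diagD_ge0 i j; have [<-|ij] := eqVneq i j.
  by have := diagD_ge0 i 0; rewrite mxE.
by have := offD_ge0 i j; rewrite mxE (negbTE ij).
Qed.

End NonNegative.

Theorem lemma1 (R : realFieldType) (p ns q : nat)
  (Hp : (0 < p)%N) (Hns : (0 < ns)%N) (Hq : (0 < q)%N)
  (Y : 'M[R]_(p, q)) (Z : 'M[R]_(ns, q))
  (B : 'M[R]_(p, ns)) (D : 'M[R]_p)
  (Hfit : (1%:M - D) *m Y = B *m Z)
  (Hrow : row_mx B D *m ones R (ns + p) = ones R p)
  (HB : mx_nonneg B) (HD : mx_nonneg D)
  (Lam : 'M[R]_p)
  (HLdiag : is_diag_mx Lam) (HLnn : mx_nonneg Lam)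
  (B' : 'M[R]_(p, ns)) (D' : 'M[R]_p)
  (HB' : B' = Lam *m B)
  (HoffD' : offd D' = Lam *m offd D)
  (HdiagD' : diagv D' = ones R p - Lam *m (B *m ones R ns + offd D *m ones R p))
  (HdiagD'nn : mx_nonneg (diagv D')) :
  [/\ (1%:M - D') *m Y = B' *m Z,
      row_mx B' D' *m ones R (ns + p) = ones R p,
      mx_nonneg B' & mx_nonneg D'].
Proof.
have scaleD : 1%:M - D' = Lam *m (1%:M - D).
  by apply: one_subD_scale; rewrite // HdiagD' rowsum_offd.
split.
- by rewrite scaleD -mulmxA Hfit HB' mulmxA.
- by rewrite HB' (row_stochastic_scale Hrow scaleD).
- by rewrite HB'; apply: mx_nonneg_diag_mul.
- apply: mx_nonneg_offd_diagv => //; rewrite HoffD'.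
  by apply: mx_nonneg_diag_mul => //; apply: mx_nonneg_offd.
Qed.
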